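(* Suppose $L_1$ is any linear order isomorphic to a suborder of $U$ and $L_2$ is a countable linear order isomorphic to a suborder of $U$. Then $L_1\cdot_\omega L_2\cong 1$.
   Context: The countable condensation $\sim_\omega$ on a linear order $L$: $x\sim_\omega y$ iff the closed interval between $x$ and $y$ is countable; $L/\!\sim_\omega$ is the linear order of its classes. $L_1L_2$ is the lexicographic product (each element of $L_1$ replaced by a copy of $L_2$), and $L_1\cdot_\omega L_2$ is the order type of $L_1L_2/\!\sim_\omega$. $U$ is the linear order $R^*+\mathbb{Q}+R$, where $R$ is obtained from $\omega_1$ by replacing each $\alpha<\omega_1$ with a point $u_\alpha$ followed by a copy of the rationals, $R^*$ is the reverse of $R$, and the middle summand is a copy of the rationals. *)

From mathcomp Require Import all_boot all_order all_algebra.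
Unset Printing Implicit Defensive.
Import Order.TTheory GRing.Theory Num.Theory.

Record ord := Ord { car :> Type; rel : car -> car -> Prop }.
Arguments rel : clear implicits.
Arguments Ord : clear implicits.

Definition ole {L : ord} (x y : L) : Prop := rel L x y \/ x = y.

Definition linear_order (L : ord) : Prop :=
  (forall x : L, ~ rel L x x) /\
  (forall x y z : L, rel L x y -> rel L y z -> rel L x z) /\
  (forall x y : L, rel L x y \/ x = y \/ rel L y x).

Definition countable_set {T : Type} (S : T -> Prop) : Prop :=
  exists f : T -> nat, forall x y, S x -> S y -> f x = f y -> x = y.
Definition countable_type (T : Type) : Prop := countable_set (fun _ : T => True).

Definition embeds (L M : ord) : Prop :=
  exists f : L -> M, (forall x y, f x = f y -> x = y) /\
                     (forall x y, rel L x y <-> rel M (f x) (f y)).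
Definition iso (L M : ord) : Prop :=
  exists f : L -> M, (forall x y, f x = f y -> x = y) /\
                     (forall z, exists x, f x = z) /\
                     (forall x y, rel L x y <-> rel M (f x) (f y)).

Definition One : ord := Ord _ (fun _ _ : unit => False).
Definition Qord : ord := Ord _ (fun x y : rat => (x < y)%R).
Definition orev (L : ord) : ord := Ord _ (fun x y : L => rel L y x).
Definition osum (A B : ord) : ord :=
  Ord _ (fun x y : A + B => match x, y with
                          | inl a, inl a' => rel A a a'
                          | inr b, inr b' => rel B b b'
                          | inl _, inr _ => True
                          | inr _, inl _ => False end).
(* Lexicographic product L1 L2: each element of L1 replaced by a copy of L2. *)
Definition oprod (A B : ord) : ord :=
  Ord _ (fun x y : A * B => rel A x.1 y.1 \/ (x.1 = y.1 /\ rel B x.2 y.2)).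

(* [W] is (isomorphic to) omega_1: an uncountable well-order all of whose
   proper initial segments are countable. *)
Definition is_omega1 (W : ord) : Prop :=
  linear_order W /\ well_founded (rel W) /\ ~ countable_type W /\
  (forall a : W, countable_set (fun b => rel W b a)).

(* R: each alpha < omega_1 replaced by a point u_alpha followed by a copy of Q. *)
Definition Rord (W : ord) : ord := oprod W (osum One Qord).
Definition Uord (W : ord) : ord := osum (osum (orev (Rord W)) Qord) (Rord W).

Definition sim_omega {L : ord} (x y : L) : Prop :=
  countable_set (fun z => (ole x z /\ ole z y) \/ (ole y z /\ ole z x)).

Definition cond (L : ord) : ord :=
  Ord _ (fun P Q : {P : L -> Prop | exists x, P = sim_omega x} =>
         proj1_sig P <> proj1_sig Q /\
         exists x y, proj1_sig P x /\ proj1_sig Q y /\ rel L x y).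

Definition omega_mul (L1 L2 : ord) : ord := cond (oprod L1 L2).

(* Every closed interval of U is countable: a point between u and v lies in
   the middle copy of Q or has omega_1-coordinate at most that of u or of v,
   and the initial segments of omega_1 are countable.  This local
   countability passes to suborders, and to the lexicographic product with a
   countable order, whose intervals project onto intervals of the first
   factor.  Hence any two points of L1 L2 are ~_omega-equivalent and the
   condensation has exactly one class. *)

From mathcomp Require Import all_boot all_algebra.
From Stdlib Require Import ClassicalEpsilon FunctionalExtensionality.
From Stdlib Require Import PropExtensionality ProofIrrelevance.

Lemma pickle_inj (T : countType) : injective (@pickle T).
Proof. exact: pcan_inj pickleK. Qed.

Lemma countable_type_countType (T : countType) : countable_type T.
Proof. by exists pickle => x y _ _ /pickle_inj. Qed.

Lemma countable_set_sub {T : Type} {A B : T -> Prop} :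
  countable_set B -> (forall x, A x -> B x) -> countable_set A.
Proof. by move=> [f Hf] AB; exists f => x y Ax Ay; apply: Hf; apply: AB. Qed.

Lemma countable_set_preim {T T' : Type} {f : T -> T'} {B : T' -> Prop} :
  injective f -> countable_set B -> countable_set (fun x => B (f x)).
Proof. by move=> f_inj [g Hg]; exists (g \o f) => x y Bx By /(Hg _ _ Bx By)/f_inj. Qed.

Lemma countable_setU {T : Type} {A B : T -> Prop} :
  countable_set A -> countable_set B -> countable_set (fun x => A x \/ B x).
Proof.
move=> [f Hf] [g Hg].
exists (fun x => pickle (if excluded_middle_informative (A x) then inl (f x)
                         else inr (g x) : nat + nat)) => x y ABx ABy.
case: excluded_middle_informative => Ax; case: excluded_middle_informative => Ay;
  move=> /pickle_inj // [] /=.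
- exact: Hf.
- by apply: Hg; [case: ABx | case: ABy].
Qed.

Lemma countable_set_pair {X Y : Type} {A : X -> Prop} {B : Y -> Prop} :
  countable_set A -> countable_set B -> countable_set (fun p => A p.1 /\ B p.2).
Proof.
move=> [f Hf] [g Hg]; exists (fun p => pickle (f p.1, g p.2)).
by move=> [x1 y1] [x2 y2] /= [Ax1 By1] [Ax2 By2] /pickle_inj [] /(Hf _ _ Ax1 Ax2) ->
  /(Hg _ _ By1 By2) ->.
Qed.

Lemma countable_set_sum {X Y : Type} {A : X -> Prop} {B : Y -> Prop} :
  countable_set A -> countable_set B ->
  countable_set (fun s => match s with inl x => A x | inr y => B y end).
Proof.
move=> [f Hf] [g Hg].
exists (fun s => pickle (match s with inl x => inl (f x) | inr y => inr (g y) end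
                         : nat + nat)).
move=> [x|y] [x'|y'] //= Hs Hs' /pickle_inj //= [] E.
- by rewrite (Hf _ _ Hs Hs' E).
- by rewrite (Hg _ _ Hs Hs' E).
Qed.

Lemma countable_set_ole (L : ord) :
  (forall a : L, countable_set (fun b => rel L b a)) ->
  forall a : L, countable_set (fun b => ole b a).
Proof. by move=> L_init a; apply: countable_setU => //; exists (fun _ => 0) => x y -> ->. Qed.

(* [sim_omega x y] is convertibly [countable_set (interval x y)]. *)
Definition interval {L : ord} (x y z : L) : Prop :=
  (ole x z /\ ole z y) \/ (ole y z /\ ole z x).

Definition locally_countable (L : ord) : Prop :=
  forall x y : L, countable_set (interval x y).

Lemma interval_homo (L M : ord) (f : L -> M) :
  (forall x y, ole x y -> ole (f x) (f y)) ->
  forall a b c, interval a b c -> interval (f a) (f b) (f c).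
Proof. by move=> f_ole a b c [[]|[]] H1 H2; [left|right]; split; apply: f_ole. Qed.

Lemma locally_countable_embeds {L M : ord} :
  embeds L M -> locally_countable M -> locally_countable L.
Proof.
move=> [f [f_inj f_rel]] lcM a b.
have f_ole x y : ole x y -> ole (f x) (f y) by case=> [/f_rel|->]; [left|right].
apply: countable_set_sub (countable_set_preim f_inj (lcM (f a) (f b))) _.
exact: interval_homo.
Qed.

Lemma locally_countable_oprod {A B : ord} :
  locally_countable A -> countable_type B -> locally_countable (oprod A B).
Proof.
move=> lcA cB x y.
have ole_fst (p q : oprod A B) : ole p q -> ole p.1 q.1.
  by case=> [[lt1|[-> _]]|->]; [left|right|right].
apply: countable_set_sub (countable_set_pair (lcA x.1 y.1) cB) _ => p Ip.
by split=> //; apply: interval_homo Ip.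
Qed.

Lemma cond_locally_countable (L : ord) :
  locally_countable L -> inhabited L -> iso (cond L) One.
Proof.
move=> lcL [a].
have class_full (x : L) : sim_omega x = fun _ => True.
  apply: functional_extensionality => y.
  by apply: propositional_extensionality; split=> // _; apply: lcL.
have cond_eq (P Q : cond L) : P = Q.
  case: P Q => [p Hp] [q Hq].
  have pq : p = q by case: Hp Hq => [x ->] [y ->]; rewrite !class_full.
  by subst q; congr exist; apply: proof_irrelevance.
exists (fun _ => tt); split; [|split].
- by move=> P Q _; apply: cond_eq.
- by case; exists (exist _ (sim_omega a) (ex_intro _ a erefl)).
- by move=> P Q; split=> //= [[neq _]]; apply: neq; rewrite (cond_eq P Q).
Qed.

Section UniversalOrder.

Variable W : ord.
Hypothesis W_init_countable : forall a : W, countable_set (fun b => rel W b a).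

Definition U_coord_in (P : W -> Prop) (z : Uord W) : Prop :=
  match z with
  | inl (inl (w, _)) | inr (w, _) => P w
  | inl (inr _) => True
  end.

Definition U_coord_le (u : Uord W) (w : W) : Prop :=
  match u with
  | inl (inl (w', _)) | inr (w', _) => ole w w'
  | inl (inr _) => False
  end.

Lemma countable_U_coord_in {P : W -> Prop} :
  countable_set P -> countable_set (U_coord_in P).
Proof.
move=> cP; have cS := countable_type_countType (unit + rat)%type.
apply: countable_set_sub (countable_set_sum (countable_set_sum
  (countable_set_pair cP cS) (countable_type_countType rat))
  (countable_set_pair cP cS)) _.
by case=> [[[w s]|q]|[w s]].
Qed.

Lemma countable_U_coord_le (u : Uord W) : countable_set (U_coord_le u).
Proof.
case: u => [[[w s]|q]|[w s]] /=; try exact: countable_set_ole.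
by exists (fun _ => 0) => ? ? [].
Qed.

(* The reversal of the left copy of R is what makes the two sides symmetric:
   below u in R^* means a larger coordinate than u, above v in R a smaller one. *)
Lemma U_between_coord {u z v : Uord W} :
  ole u z -> ole z v -> U_coord_in (fun w => U_coord_le u w \/ U_coord_le v w) z.
Proof.
case: z => [[[w s]|q]|[w s]] /= Huz Hzv //.
- left; case: Huz => [|->]; last by right.
  by case: u => [[[w' s']|q']|[w' s']] //= [lt|[-> _]]; [left|right].
- right; case: Hzv => [|<-]; last by right.
  by case: v => [[[w' s']|q']|[w' s']] //= [lt|[-> _]]; [left|right].
Qed.

Lemma locally_countable_Uord : locally_countable (Uord W).
Proof.
move=> u v.
apply: countable_set_sub (countable_U_coord_in
  (countable_setU (countable_U_coord_le u) (countable_U_coord_le v))) _.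
move=> z [[Huz Hzv]|[Hvz Hzu]]; first exact: U_between_coord.
by have := U_between_coord Hvz Hzu; case: z {Hvz Hzu} => [[[w s]|q]|[w s]] /=; tauto.
Qed.

End UniversalOrder.

Theorem lemma5p3 (W : ord) (HW : is_omega1 W) (L1 L2 : ord)
  (lin1 : linear_order L1) (lin2 : linear_order L2)
  (ne1 : inhabited (car L1)) (ne2 : inhabited (car L2))
  (e1 : embeds L1 (Uord W)) (e2 : embeds L2 (Uord W))
  (c2 : countable_type L2) :
  iso (omega_mul L1 L2) One.
Proof.
have [_ [_ [_ W_init_countable]]] := HW.
apply: cond_locally_countable; last by case: ne1 => a; case: ne2 => b; exact: inhabits (a, b).
apply: locally_countable_oprod c2.
exact: locally_countable_embeds e1 (locally_countable_Uord _ W_init_countable).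
Qed.
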